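(* Let $\tilde F=[\tilde{\mathbf{f}}_1,\dots,\tilde{\mathbf{f}}_K]\in\mathbb{R}^{n\times K}$, $\eta>0$, and $B=(b_{jl}):=(\tilde F^\top\tilde F+\eta I)^{-1}$. Then the $j$-th column of $\tilde FB$ is $$[\tilde FB]_j=b_{jj}\tilde{\mathbf{f}}_j+\sum_{l\ne j}b_{jl}\tilde{\mathbf{f}}_l,$$ and for every $l\ne j$, $$\mathrm{sign}(b_{jl})=-\mathrm{sign}\big(\tilde{\mathbf{f}}_j^\top P_{\eta,-jl}\tilde{\mathbf{f}}_l\big),$$ where $P_{\eta,-jl}:=I-\tilde F_{-jl}(\tilde F_{-jl}^\top\tilde F_{-jl}+\eta I)^{-1}\tilde F_{-jl}^\top$ and $\tilde F_{-jl}$ is $\tilde F$ with the $j$-th and $l$-th columns removed.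
   Context: In the paper, $\tilde F=(I-\mathbf{1}\mathbf{1}^\top/n)\sigma(XW)$ is the centered hidden-layer activation matrix of a 2-layer network with $K$ hidden neurons and $\eta$ is the weight decay. *)

From HB Require Import structures.
From mathcomp Require Import all_boot all_order all_algebra.
Set Implicit Arguments. Unset Strict Implicit. Unset Printing Implicit Defensive.
Import Order.TTheory GRing.Theory Num.Theory.
Local Open Scope ring_scope.

(* Indices of the columns kept after removing columns j and l of an n x K
   matrix, in increasing order: the i-th element of
   [k in 'I_K | k != j and k != l]. When j != l this list has exactly K-2
   elements, so [rem_idx j l] enumerates them (the default j is never used). *)
Definition rem_idx (K : nat) (j l : 'I_K) (i : 'I_(K - 2)) : 'I_K :=
  nth j [seq k <- enum 'I_K | (k != j) && (k != l)] i.

Definition remove_cols2 (R : Type) (n K : nat) (j l : 'I_K)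
    (F : 'M[R]_(n, K)) : 'M[R]_(n, K - 2) :=
  colsub (rem_idx j l) F.

Definition P_eta (R : comUnitRingType) (n K : nat) (eta : R) (j l : 'I_K)
    (F : 'M[R]_(n, K)) : 'M[R]_n :=
  let G := remove_cols2 j l F in
  1%:M - G *m invmx (G^T *m G + eta%:M) *m G^T.

(* Order the columns of F as [f_j, f_l, F_{-jl}] and solve
   (F^T F + eta I) v = e_l, so that v is the l-th column of B.  Eliminating the
   F_{-jl}-block of the system (a Schur complement) gives F v = P y with
   P = P_{eta,-jl} and y = v_j f_j + v_l f_l, which leaves the 2x2 system
   S (v_j, v_l)^T = (0, 1)^T with S = [f_j f_l]^T P [f_j f_l] + eta I.  As P is
   positive semidefinite, det S > 0, and Cramer's rule gives
   b_jl = v_j = - f_j^T P f_l / det S. *)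

From HB Require Import structures.
From mathcomp Require Import all_boot all_order all_algebra.
From mathcomp Require Import ring lra.
Import Order.TTheory GRing.Theory Num.Theory.
Set Implicit Arguments. Unset Strict Implicit.
Local Open Scope ring_scope.

Section RemoveCols2.
Variables (K : nat) (j l : 'I_K).
Hypothesis l_neq_j : l != j.

Let kept := [seq k <- enum 'I_K | (k != j) && (k != l)].

Lemma size_kept : size kept = (K - 2)%N.
Proof.
have cardK := card_ord K.
rewrite (cardD1 j) (cardD1 l) !inE l_neq_j /= in cardK.
rewrite size_filter -sum1_count big_enum_cond /= sum1_card -[in RHS]cardK addnA addKn.
by apply: eq_card => k; rewrite unfold_in !inE andbT andbC.
Qed.

Lemma rem_idx_neq (i : 'I_(K - 2)) : (rem_idx j l i != j) && (rem_idx j l i != l).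
Proof.
have : rem_idx j l i \in kept by rewrite mem_nth // size_kept.
by rewrite mem_filter => /andP[].
Qed.

Lemma big_rem_idx (V : nmodType) (f : 'I_K -> V) :
  \sum_(k | (k != j) && (k != l)) f k = \sum_(i < K - 2) f (rem_idx j l i).
Proof.
transitivity (\sum_(k <- kept) f k); first by rewrite big_filter big_enum_cond.
by rewrite (big_nth j) size_kept big_mkord.
Qed.

Lemma mulmx_remove_cols2 (R : comPzRingType) (n : nat) (F : 'M[R]_(n, K))
    (v : 'cV[R]_K) :
  F *m v = v j 0 *: col j F + v l 0 *: col l F
           + remove_cols2 j l F *m rowsub (rem_idx j l) v.
Proof.
apply/colP => a; rewrite !mxE (bigD1 j) //= (bigD1 l) //= addrA.
rewrite (eq_bigl (fun k => (k != j) && (k != l))) => [|k]; last by rewrite andbC.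
rewrite big_rem_idx [v j 0 * _]mulrC [v l 0 * _]mulrC.
by congr (_ + _); apply: eq_bigr => i _; rewrite !mxE.
Qed.

Lemma rowsub_rem_idx_delta (R : pzSemiRingType) :
  rowsub (rem_idx j l) (delta_mx l 0) = 0 :> 'cV[R]_(K - 2).
Proof.
apply/colP => i; rewrite !mxE.
by have /andP[_ /negbTE ->] := rem_idx_neq i.
Qed.

End RemoveCols2.

Section QuadraticForm.
Variables (R : realFieldType) (n : nat).

Lemma dotmx_self_ge0 (u : 'cV[R]_n) : 0 <= (u^T *m u) 0 0.
Proof. by rewrite mxE; apply: sumr_ge0 => i _; rewrite mxE -expr2 sqr_ge0. Qed.

Lemma dotmx_self_eq0 (u : 'cV[R]_n) : (u^T *m u) 0 0 = 0 -> u = 0.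
Proof.
rewrite mxE => /eqP; rewrite psumr_eq0 => [/allP u0|i _]; last first.
  by rewrite mxE -expr2 sqr_ge0.
apply/colP => i; have := u0 i (mem_index_enum _).
by rewrite /= !mxE mulf_eq0 orbb => /eqP.
Qed.

Variable P : 'M[R]_n.

Definition qform (x y : 'cV[R]_n) : R := (x^T *m P *m y) 0 0.

Lemma qformC : P^T = P -> forall x y, qform x y = qform y x.
Proof.
move=> P_sym x y; rewrite /qform.
have -> : (x^T *m P *m y) 0 0 = (x^T *m P *m y)^T 0 0 by rewrite [RHS]mxE.
by rewrite !trmx_mul trmxK P_sym mulmxA.
Qed.

Lemma qform_linear_l a b (x y z : 'cV[R]_n) :
  qform (a *: x + b *: y) z = a * qform x z + b * qform y z.
Proof. by rewrite /qform linearD !linearZ /= !mulmxDl -!scalemxAl !mxE. Qed.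

Lemma qform_linear_r a b (x y z : 'cV[R]_n) :
  qform z (a *: x + b *: y) = a * qform z x + b * qform z y.
Proof. by rewrite /qform mulmxDr -!scalemxAr !mxE. Qed.

(* With a = qform x x + eta and c = qform x y, a times the determinant equals
   qform (a y - c x) (a y - c x) + eta (a^2 + c^2). *)
Lemma qform_det2_gt0 (eta : R) (x y : 'cV[R]_n) :
  P^T = P -> (forall z, 0 <= qform z z) -> 0 < eta ->
  0 < (qform x x + eta) * (qform y y + eta) - qform x y ^+ 2.
Proof.
move=> P_sym P_psd eta_gt0.
set a := qform x x + eta; set c := qform x y; set D := _ - _.
have a_gt0 : 0 < a by rewrite ltr_pwDr ?P_psd.
suff : 0 < a * D by rewrite pmulr_rgt0.
have := P_psd (- c *: x + a *: y).
rewrite !(qform_linear_l, qform_linear_r) (qformC P_sym y x) -/c.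
have : 0 < eta * (a ^+ 2 + c ^+ 2) by rewrite mulr_gt0 // ltr_pwDl ?sqr_ge0 ?exprn_gt0.
rewrite /D /a; nra.
Qed.

End QuadraticForm.

Section RegularizedResidual.
Variables (R : realFieldType) (n m : nat) (G : 'M[R]_(n, m)) (eta : R).

Let N := G^T *m G + eta%:M.

Definition reg_resid : 'M[R]_n := 1%:M - G *m invmx N *m G^T.

Lemma gram_reg_form (x : 'cV[R]_m) :
  x^T *m N *m x = (G *m x)^T *m (G *m x) + eta *: (x^T *m x).
Proof. by rewrite mulmxDr mulmxDl mul_mx_scalar -scalemxAl trmx_mul !mulmxA. Qed.

Lemma trmx_gram_reg_inv : (invmx N)^T = invmx N.
Proof. by rewrite trmx_inv linearD /= trmx_mul trmxK tr_scalar_mx. Qed.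

Lemma trmx_reg_resid : reg_resid^T = reg_resid.
Proof. by rewrite linearB /= trmx1 !trmx_mul trmxK trmx_gram_reg_inv mulmxA. Qed.

Hypothesis eta_gt0 : 0 < eta.

Lemma gram_reg_unitmx : N \in unitmx.
Proof.
rewrite unitmxE unitfE; apply/negP => /det0P[v v_neq0 vN0].
set u := v^T; have : (G *m u)^T *m (G *m u) + eta *: (u^T *m u) = 0.
  by rewrite -gram_reg_form {1}/u trmxK vN0 mul0mx.
move/matrixP/(_ 0 0)/eqP.
rewrite [(_ + _ : 'M_1) 0 0]mxE [(_ *: _ : 'M_1) 0 0]mxE [(0 : 'M_1) 0 0]mxE.
rewrite paddr_eq0 ?mulr_ge0 ?dotmx_self_ge0 ?ltW //.
rewrite mulf_eq0 (gt_eqF eta_gt0) /= => /andP[_ /eqP /dotmx_self_eq0 u0].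
by move: v_neq0; rewrite -[v]trmxK -/u u0 trmx0 eqxx.
Qed.

Lemma reg_resid_formE (x : 'cV[R]_n) :
  let z := invmx N *m (G^T *m x) in
  x^T *m reg_resid *m x = (x - G *m z)^T *m (x - G *m z) + eta *: (z^T *m z).
Proof.
move=> z; have Nz : N *m z = G^T *m x by rewrite mulKVmx ?gram_reg_unitmx.
have Gz_res : (G *m z)^T *m (x - G *m z) = eta *: (z^T *m z).
  by rewrite mulmxBr {1}trmx_mul -mulmxA -Nz mulmxA gram_reg_form addrC addKr.
rewrite [(x - _)^T]linearB /= mulmxBl Gz_res subrK.
by rewrite /reg_resid /z mulmxBr mulmx1 mulmxBl mulmxBr !mulmxA.
Qed.

Lemma reg_resid_form_ge0 (x : 'cV[R]_n) : 0 <= qform reg_resid x x.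
Proof.
rewrite /qform reg_resid_formE [(_ + _ : 'M_1) 0 0]mxE [(_ *: _ : 'M_1) 0 0]mxE.
by rewrite addr_ge0 ?mulr_ge0 ?dotmx_self_ge0 ?ltW.
Qed.

Lemma reg_resid_solve (y : 'cV[R]_n) (w : 'cV[R]_m) :
  G^T *m (y + G *m w) + eta *: w = 0 -> y + G *m w = reg_resid *m y.
Proof.
rewrite mulmxDr -addrA mulmxA -mul_scalar_mx -mulmxDl -/N => /eqP.
rewrite addrC addr_eq0 => /eqP Nw; have -> : w = - (invmx N *m (G^T *m y)).
  by rewrite -mulmxN -Nw mulKmx ?gram_reg_unitmx.
by rewrite /reg_resid mulmxBl mul1mx mulmxN !mulmxA.
Qed.

End RegularizedResidual.

Section GramRegInverse.
Variables (R : realFieldType) (n K : nat) (F : 'M[R]_(n, K)) (eta : R).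

Lemma col_mul_gram_reg_inv (j : 'I_K) :
  let B := invmx (F^T *m F + eta%:M) in
  col j (F *m B) = B j j *: col j F + \sum_(l < K | l != j) B j l *: col l F.
Proof.
move=> B; have B_sym : B^T = B := trmx_gram_reg_inv F eta.
transitivity (\sum_l B j l *: col l F); last by rewrite (bigD1 j).
apply/colP => a; rewrite !mxE summxE; apply: eq_bigr => k _.
by rewrite !mxE mulrC -[in RHS]B_sym mxE.
Qed.

Variables (j l : 'I_K).
Hypotheses (l_neq_j : l != j) (eta_gt0 : 0 < eta).

Lemma gram_reg_inv_offdiag :
  let B := invmx (F^T *m F + eta%:M) in
  let P := P_eta eta j l F in
  let c := qform P (col j F) (col l F) in
  B j l * ((qform P (col j F) (col j F) + eta)
           * (qform P (col l F) (col l F) + eta) - c ^+ 2) = - c.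
Proof.
move=> B P c; set G := remove_cols2 j l F.
have P_def : P = reg_resid G eta by [].
have P_sym : P^T = P by rewrite P_def trmx_reg_resid.
pose v : 'cV[R]_K := B *m delta_mx l 0.
have Mv : F^T *m (F *m v) + eta *: v = delta_mx l 0.
  by rewrite mulmxA -mul_scalar_mx -mulmxDl mulKVmx ?gram_reg_unitmx.
set y := v j 0 *: col j F + v l 0 *: col l F.
have Fv : F *m v = P *m y.
  have Fv_split := mulmx_remove_cols2 l_neq_j F v; rewrite -/y -/G in Fv_split.
  rewrite P_def Fv_split; apply: (reg_resid_solve eta_gt0).
  rewrite -Fv_split /G /remove_cols2 trmx_mxsub.
  rewrite [rowsub _ F^T]rowsubE [rowsub _ v]rowsubE -mulmxA scalemxAr -mulmxDr.
  by rewrite Mv -rowsubE rowsub_rem_idx_delta.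
have coord k : qform P (col k F) y + eta * v k 0 = (k == l)%:R.
  have /colP/(_ k) := Mv; rewrite [(_ + _ : 'cV_K) k 0]mxE [(_ *: _ : 'cV_K) k 0]mxE.
  rewrite [delta_mx _ _ k 0]mxE eqxx andbT => <-.
  by rewrite Fv /qform -mulmxA tr_col -row_mul [row _ _ 0 0]mxE.
have eq_j := coord j; have eq_l := coord l.
rewrite /y !qform_linear_r -/c eqxx in eq_j eq_l.
rewrite eq_sym (negbTE l_neq_j) (qformC P_sym (col l F)) -/c in eq_j eq_l.
have -> : B j l = v j 0 by rewrite /v -colE mxE.
set pjj := qform P _ _ in eq_j *; set pll := qform P _ _ in eq_l *.
transitivity ((pll + eta) * (v j 0 * pjj + v l 0 * c + eta * v j 0)
              - c * (v j 0 * c + v l 0 * pll + eta * v l 0)); first by ring.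
by rewrite eq_j eq_l mulr0 mulr1 sub0r.
Qed.

End GramRegInverse.

Theorem mainTheorem8 (R : realFieldType) (n K : nat) (F : 'M[R]_(n, K))
    (eta : R) (heta : 0 < eta) :
  let B := invmx (F^T *m F + eta%:M) in
  (forall j : 'I_K,
     col j (F *m B) = B j j *: col j F + \sum_(l < K | l != j) B j l *: col l F)
  /\
  (forall j l : 'I_K, l != j ->
     Num.sg (B j l) = - Num.sg (((col j F)^T *m P_eta eta j l F *m col l F) 0 0)).
Proof.
move=> B; split=> [j | j l l_neq_j]; first exact: col_mul_gram_reg_inv.
have P_sym : (P_eta eta j l F)^T = P_eta eta j l F := trmx_reg_resid _ _.
have P_psd := reg_resid_form_ge0 (remove_cols2 j l F) heta.
have D_gt0 := qform_det2_gt0 (col j F) (col l F) P_sym P_psd heta.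
have /(congr1 Num.sg) := gram_reg_inv_offdiag F l_neq_j heta.
by rewrite sgrM (gtr0_sg D_gt0) mulr1 sgrN.
Qed.
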